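(* Let $M_{\mathrm{B_{ii}}}$ be the monoid with generators $a,b,c$ and relations $cbb=bba$, $bc=ab$, $ac=ca$. Then $M_{\mathrm{B_{ii}}}$ satisfies the cancellation condition: for $A,B,X,Y\in M_{\mathrm{B_{ii}}}$, $AXB=AYB$ implies $X=Y$.
   Context: A monoid given by generators and relations is the quotient of the free monoid on the generators by the congruence generated by the relations. *)

From Stdlib Require Import List.
Import ListNotations.

Inductive gen : Type := ga | gb | gc.

Definition word := list gen.

Inductive rel_Bii : word -> word -> Prop :=
  | rel1 : rel_Bii [gc; gb; gb] [gb; gb; ga]
  | rel2 : rel_Bii [gb; gc] [ga; gb]
  | rel3 : rel_Bii [ga; gc] [gc; ga].

Inductive cong_gen (R : word -> word -> Prop) : word -> word -> Prop :=
  | cg_base : forall u v, R u v -> cong_gen R u v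
  | cg_refl : forall u, cong_gen R u u
  | cg_sym : forall u v, cong_gen R u v -> cong_gen R v u
  | cg_trans : forall u v w, cong_gen R u v -> cong_gen R v w -> cong_gen R u w
  | cg_mul : forall u u' v v', cong_gen R u u' -> cong_gen R v v' ->
      cong_gen R (u ++ v) (u' ++ v').

Definition eqM (u v : word) : Prop := cong_gen rel_Bii u v.

(* M_Bii is represented faithfully in the monoid N ⋉ N^3, where n in N acts
   on N^3 by cyclically permuting the coordinates n times: a, b, c go to
   (0,e2), (1,0), (0,e1).  This monoid is cancellative.  Faithfulness comes
   from a normal form: every word equals c^x a^y or b^m c^z b c^x a^y, and the
   image of such a word determines m, x, y, z. *)
From Stdlib Require Import List Arith Lia Setoid Morphisms.
Import ListNotations.

Definition vec := (nat * nat * nat)%type.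

Definition rot (v : vec) : vec := let '(x, y, z) := v in (y, z, x).

Definition shift (k : nat) (v : vec) : vec := Nat.iter k rot v.

Definition vadd (u v : vec) : vec :=
  let '(x, y, z) := u in let '(x', y', z') := v in (x + x', y + y', z + z').

Definition vzero : vec := (0, 0, 0).

Lemma shift_S k v : shift (S k) v = rot (shift k v).
Proof. reflexivity. Qed.

Lemma shift_vadd k u v : shift k (vadd u v) = vadd (shift k u) (shift k v).
Proof.
  induction k as [|k IHk]; [reflexivity|].
  rewrite !shift_S, IHk.
  destruct (shift k u) as [[? ?] ?], (shift k v) as [[? ?] ?]; reflexivity.
Qed.

Lemma shift_add m n v : shift (m + n) v = shift n (shift m v).
Proof. unfold shift. rewrite Nat.add_comm. apply Nat.iter_add. Qed.

Lemma shift_vzero k : shift k vzero = vzero.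
Proof. induction k as [|k IHk]; [reflexivity|]. now rewrite shift_S, IHk. Qed.

Lemma shift_inj k u v : shift k u = shift k v -> u = v.
Proof.
  induction k as [|k IHk]; [easy|].
  rewrite !shift_S. intro H. apply IHk.
  destruct (shift k u) as [[? ?] ?], (shift k v) as [[? ?] ?].
  simpl in H. congruence.
Qed.

Lemma vadd_assoc u v w : vadd (vadd u v) w = vadd u (vadd v w).
Proof.
  destruct u as [[? ?] ?], v as [[? ?] ?], w as [[? ?] ?]; simpl.
  f_equal; [f_equal|]; lia.
Qed.

Lemma vadd_0l v : vadd vzero v = v.
Proof. now destruct v as [[? ?] ?]. Qed.

Lemma vadd_0r v : vadd v vzero = v.
Proof. destruct v as [[? ?] ?]; simpl. f_equal; [f_equal|]; lia. Qed.

Lemma vadd_cancel_l u v w : vadd u v = vadd u w -> v = w.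
Proof.
  destruct u as [[? ?] ?], v as [[? ?] ?], w as [[? ?] ?]; simpl.
  intro H; injection H as H1 H2 H3; f_equal; [f_equal|]; lia.
Qed.

Lemma vadd_cancel_r u v w : vadd v u = vadd w u -> v = w.
Proof.
  destruct u as [[? ?] ?], v as [[? ?] ?], w as [[? ?] ?]; simpl.
  intro H; injection H as H1 H2 H3; f_equal; [f_equal|]; lia.
Qed.

Definition elt := (nat * vec)%type.

Definition one : elt := (0, vzero).

Definition mul (g h : elt) : elt :=
  let '(m1, v1) := g in let '(m2, v2) := h in (m1 + m2, vadd (shift m2 v1) v2).

Lemma mul_assoc g h k : mul (mul g h) k = mul g (mul h k).
Proof.
  destruct g as [m1 v1], h as [m2 v2], k as [m3 v3]; simpl.
  rewrite Nat.add_assoc, shift_vadd, vadd_assoc, shift_add. reflexivity.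
Qed.

Lemma mul_1l g : mul one g = g.
Proof. destruct g as [m v]; simpl. now rewrite shift_vzero, vadd_0l. Qed.

Lemma mul_1r g : mul g one = g.
Proof. destruct g as [m v]; simpl. now rewrite vadd_0r, Nat.add_0_r. Qed.

Lemma mul_cancel_l g h1 h2 : mul g h1 = mul g h2 -> h1 = h2.
Proof.
  destruct g as [m v], h1 as [m1 v1], h2 as [m2 v2]; simpl; intro H.
  injection H as Hm Hv. assert (m1 = m2) as <- by lia.
  f_equal. exact (vadd_cancel_l _ _ _ Hv).
Qed.

Lemma mul_cancel_r g h1 h2 : mul h1 g = mul h2 g -> h1 = h2.
Proof.
  destruct g as [m v], h1 as [m1 v1], h2 as [m2 v2]; simpl; intro H.
  injection H as Hm Hv. assert (m1 = m2) as <- by lia.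
  f_equal. exact (shift_inj _ _ _ (vadd_cancel_r _ _ _ Hv)).
Qed.

Definition gen_elt (l : gen) : elt :=
  match l with
  | ga => (0, (0, 1, 0))
  | gb => (1, vzero)
  | gc => (0, (1, 0, 0))
  end.

Fixpoint word_elt (w : word) : elt :=
  match w with
  | [] => one
  | l :: w' => mul (gen_elt l) (word_elt w')
  end.

Lemma word_elt_app u v : word_elt (u ++ v) = mul (word_elt u) (word_elt v).
Proof.
  induction u as [|l u IHu]; cbn [app word_elt].
  - now rewrite mul_1l.
  - now rewrite IHu, mul_assoc.
Qed.

Lemma word_elt_snoc u l : word_elt (u ++ [l]) = mul (word_elt u) (gen_elt l).
Proof. rewrite word_elt_app; simpl. now rewrite mul_1r. Qed.

Lemma eqM_word_elt u v : eqM u v -> word_elt u = word_elt v.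
Proof.
  induction 1 as [u v []| | | |]; try reflexivity; try congruence.
  rewrite !word_elt_app; congruence.
Qed.

Definition reachable (g : elt) : Prop := let '(m, (_, _, z)) := g in m = 0 -> z = 0.

Lemma word_elt_reachable u : reachable (word_elt u).
Proof.
  induction u as [|l u IHu]; [easy|]; simpl.
  destruct (word_elt u) as [m [[x y] z]].
  destruct l, m as [|m]; simpl in *; try exact IHu; try easy;
    destruct (vadd _ _) as [[? ?] ?]; easy.
Qed.

#[local] Instance eqM_equivalence : Equivalence eqM.
Proof. split; [exact (cg_refl _) | exact (cg_sym _) | exact (cg_trans _)]. Qed.

#[local] Instance app_eqM_proper : Proper (eqM ==> eqM ==> eqM) (@app gen).
Proof. intros u u' Hu v v' Hv. exact (cg_mul _ _ _ _ _ Hu Hv). Qed.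

#[local] Instance cons_eqM_proper (l : gen) : Proper (eqM ==> eqM) (cons l).
Proof. intros v v' Hv. exact (cg_mul _ [l] [l] _ _ (cg_refl _ _) Hv). Qed.

Notation a_pow n := (repeat ga n).
Notation b_pow n := (repeat gb n).
Notation c_pow n := (repeat gc n).

Lemma repeat_S_app {T : Type} (t : T) n l : repeat t (S n) ++ l = repeat t n ++ t :: l.
Proof. cbn [repeat]. now rewrite repeat_cons, <- app_assoc. Qed.

(* The relations and their iterates are stated with an arbitrary tail [l], so
   that they rewrite inside right-nested words. *)
Lemma eqM_rel u v l : rel_Bii u v -> eqM (u ++ l) (v ++ l).
Proof. intro H. now rewrite (cg_base _ _ _ H). Qed.

Lemma a_pow_b q l : eqM (a_pow q ++ gb :: l) (gb :: c_pow q ++ l).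
Proof.
  induction q as [|q IHq]; [reflexivity|]; simpl.
  rewrite IHq. exact (symmetry (eqM_rel _ _ _ rel2)).
Qed.

Lemma a_pow_c q l : eqM (a_pow q ++ gc :: l) (gc :: a_pow q ++ l).
Proof.
  induction q as [|q IHq]; [reflexivity|]; simpl.
  rewrite IHq. exact (eqM_rel _ _ _ rel3).
Qed.

Lemma c_pow_a_pow p q l : eqM (c_pow p ++ a_pow q ++ l) (a_pow q ++ c_pow p ++ l).
Proof.
  induction p as [|p IHp]; [reflexivity|]; simpl.
  rewrite IHp. symmetry. apply a_pow_c.
Qed.

Lemma c_pow_bb r l : eqM (c_pow r ++ gb :: gb :: l) (gb :: gb :: a_pow r ++ l).
Proof.
  induction r as [|r IHr]; [reflexivity|]; simpl.
  rewrite IHr. exact (eqM_rel _ _ _ rel1).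
Qed.

Definition canon (g : elt) : word :=
  let '(m, (x, y, z)) := g in
  match m with
  | 0 => c_pow x ++ a_pow y
  | S m' => b_pow m' ++ c_pow z ++ gb :: c_pow x ++ a_pow y
  end.

Lemma canon_snoc_b m x y z :
  eqM (b_pow m ++ c_pow z ++ gb :: c_pow x ++ a_pow y ++ [gb])
      (b_pow m ++ gb :: c_pow x ++ gb :: c_pow y ++ a_pow z).
Proof.
  rewrite (a_pow_b y), <- (a_pow_b x), (c_pow_a_pow z x), (c_pow_bb z).
  now rewrite <- (c_pow_a_pow y z), (a_pow_b x), app_nil_r.
Qed.

Lemma canon_snoc g l :
  reachable g -> eqM (canon g ++ [l]) (canon (mul g (gen_elt l))).
Proof.
  destruct g as [m [[x y] z]]; intro Hg.
  destruct l, m as [|m]; simpl; rewrite ?Nat.add_0_r, ?Nat.add_1_r, <- ?app_assoc;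
    cbn [app]; rewrite <- ?app_assoc, ?repeat_S_app.
  - now rewrite <- repeat_cons.
  - now rewrite <- repeat_cons.
  - rewrite (a_pow_b y), Hg by reflexivity. now rewrite !app_nil_r.
  - apply canon_snoc_b.
  - now rewrite (a_pow_c y), app_nil_r.
  - now rewrite (a_pow_c y), app_nil_r.
Qed.

Lemma eqM_canon u : eqM u (canon (word_elt u)).
Proof.
  induction u as [|l u IHu] using rev_ind; [reflexivity|].
  rewrite word_elt_snoc, <- canon_snoc by apply word_elt_reachable.
  now rewrite IHu at 1.
Qed.

Lemma eqM_iff_word_elt u v : eqM u v <-> word_elt u = word_elt v.
Proof.
  split; [apply eqM_word_elt|].
  intro H. now rewrite (eqM_canon u), (eqM_canon v), H.
Qed.

Theorem theorem4 : forall A X Y B : word,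
  eqM (A ++ X ++ B) (A ++ Y ++ B) -> eqM X Y.
Proof.
  intros A X Y B H.
  apply eqM_iff_word_elt. apply eqM_iff_word_elt in H.
  rewrite !word_elt_app in H.
  exact (mul_cancel_r _ _ _ (mul_cancel_l _ _ _ H)).
Qed.
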